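(* Let $p=2\ell+1$ be an odd prime, let $K$ be an oriented knot with Alexander polynomial $\Delta_K(t)$, and let $\alpha\colon\pi_K\to D_p$ be an epimorphism. Then \[\Delta_K^{\varrho\circ\alpha}(t)\equiv\left(\frac{\Delta_K(t)}{1-t}\right)^{\ell+1}\cdot\left(\frac{\Delta_K(-t)}{1+t}\right)^{\ell}\pmod p,\] up to the indeterminacy $\pm t^k$.
   Context: $D_p=\langle x,y\mid x^2=y^p=1,\ xyx=y^{-1}\rangle$ acts on $\mathbb Z/p$ by $y\cdot n=n-1$, $x\cdot n=-n$; $\varrho\colon D_p\to\mathrm{GL}(p,\mathbb Z)$ is the associated permutation representation. $\pi_K=\pi_1(S^3\setminus\nu K)$. Twisted Alexander polynomial (Wada's invariant): let $\phi\colon\pi_K\to\mathbb Z$ send the oriented meridian to $1$; for $\alpha\colon\pi_K\to\mathrm{Aut}(V)$, $V$ a finitely generated free module over a UFD $R$ with quotient field $Q$, let $\alpha\otimes\phi$ act on $V\otimes_R R[t^{\pm1}]$ by $g\mapsto(v\otimes f\mapsto\alpha(g)v\otimes t^{\phi(g)}f)$. For a deficiency-one presentation $\langle g_1,\dots,g_{k+1}\mid r_1,\dots,r_k\rangle$ of $\pi_K$ with Fox matrix $M=(\partial r_i/\partial g_j)$ and $M_i$ obtained by deleting column $i$ with $\phi(g_i)\ne0$, set $\Delta_K^\alpha(t)=\det((\alpha\otimes\phi)(M_i))\det((\alpha\otimes\phi)(1-g_i))^{-1}\in Q(t)$. Congruence mod $p$ means the two rational functions agree after reducing coefficients mod $p$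 (equivalently, the twisted polynomial of the mod $p$ reduction $\varrho_p\circ\alpha$ over $\mathbb F_p$ equals the right-hand side in $\mathbb F_p(t)$ up to $\pm t^k$). *)

From HB Require Import structures.
From mathcomp Require Import all_boot all_order all_algebra.
From mathcomp Require Import fraction.

Set Implicit Arguments.
Unset Strict Implicit.
Unset Printing Implicit Defensive.

Import GRing.Theory.
Local Open Scope ring_scope.

(* Knot diagrams as combinatorial planar 4-valent maps.                *)
(* A diagram with n.+1 crossings has darts (c, i), c a crossing and    *)
(* i : 'I_4 the position of the half-edge at c in counterclockwise     *)
(* order.  Positions 0,2 form the under-strand, positions 1,3 the      *)
(* over-strand.  e is the edge involution pairing the two ends of each *)
(* edge of the diagram.                                                *)

Definition dart (n : nat) := ('I_n.+1 * 'I_4)%type.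

Definition rot n (d : dart n) : dart n := (d.1, ordS d.2).
Definition opp n (d : dart n) : dart n := rot (rot d).
Definition dart0 n : dart n := (ord0, ord0).

(* following the knot: arrive at d, leave through opp d, travel along  *)
(* the edge to e (opp d)                                               *)
Definition strand n (e : dart n -> dart n) (d : dart n) := e (opp d).

(* e is a fixed-point-free involution, the map is planar (Euler        *)
(* characteristic 2: V - E + F = (n+1) - 2(n+1) + F = 2, faces being   *)
(* the orbits of rot \o e), and the strands form a single closed curve *)
(* (two strand orbits = the two orientations of one component).       *)
Definition knot_diagram n (e : dart n -> dart n) : Prop :=
  [/\ forall d, e (e d) = d,
      forall d, e d != d,
      fcard (fun d => rot (e d)) (predT : pred (dart n)) = (n.+1 + 2)%N
    & fcard (strand e) (predT : pred (dart n)) = 2%N].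

(* orientation: the knot is oriented so that dart0 is an arriving dart *)
Definition arriving n (e : dart n -> dart n) (d : dart n) : bool :=
  fconnect (strand e) (dart0 n) d.

(* Words in the generators x_d (one meridian generator per dart: x_d is *)
(* the oriented meridian of the edge containing d); (d, true) = x_d^-1. *)
Definition word n := seq (dart n * bool).

(* Wirtinger-type relators, one per dart d:                            *)
(*  - d departing:           x_(e d) = x_d      (same edge)            *)
(*  - d arriving over-dart:  x_(opp d) = x_d    (over-strand)          *)
(*  - d arriving under-dart, o the arriving over-dart at the crossing: *)
(*       x_(opp d) = x_o^eps x_d x_o^-eps, eps the crossing sign       *)
(*    (positive iff rot o = d).                                        *)
Definition relator n (e : dart n -> dart n) (d : dart n) : word n :=
  if arriving e d then
    if odd d.2 then [:: (opp d, true); (d, false)]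
    else
      let o1 := rot (d.1, ord0) in
      let o := if arriving e o1 then o1 else opp o1 in
      if rot o == d then [:: (opp d, true); (o, false); (d, false); (o, true)]
      else [:: (opp d, true); (o, true); (d, false); (o, false)]
  else [:: (e d, true); (d, false)].

(* The dihedral group D_p, realised (faithfully) as the affine maps     *)
(* n |-> +-n + c of Z/p; (s, c) acts by n |-> (if s then -n else n)+c.  *)
(* Product = composition (g * h acts by h first).                      *)

Definition Dp (p : nat) := (bool * 'Z_p)%type.

Definition Dact p (g : Dp p) (m : 'Z_p) : 'Z_p := (if g.1 then - m else m) + g.2.
Definition Dmul p (g h : Dp p) : Dp p :=
  (g.1 (+) h.1, (if g.1 then - h.2 else h.2) + g.2).
Definition Dinv p (g : Dp p) : Dp p := (g.1, - (if g.1 then - g.2 else g.2)).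
Definition D1 p : Dp p := (false, 0).
(* the generators: x . n = -n,  y . n = n - 1 *)
Definition Dx p : Dp p := (true, 0).
Definition Dy p : Dp p := (false, -1).

Definition evalw n p (a : dart n -> Dp p) (w : word n) : Dp p :=
  foldr (fun x acc => Dmul (if x.2 then Dinv (a x.1) else a x.1) acc) (D1 p) w.

(* a homomorphism pi_K -> D_p given on the Wirtinger generators *)
Definition is_hom n p (e : dart n -> dart n) (a : dart n -> Dp p) : Prop :=
  forall d, evalw a (relator e d) = D1 p.

Definition is_epi n p (a : dart n -> Dp p) : Prop :=
  forall g : Dp p, exists w : word n, evalw a w = g.

Definition rho (R : nzRingType) p (g : Dp p) : 'M[R]_((Zp_trunc p).+2) :=
  \matrix_(i, j) ((i == Dact g j)%:R).

(* Fox calculus under a representation X (images of generators) and Xi *)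
(* (images of their inverses).                                         *)

Fixpoint fox (F : fieldType) q n (X Xi : dart n -> 'M[F]_q) (w : word n)
    (g : dart n) : 'M[F]_q :=
  match w with
  | [::] => 0
  | (h, b) :: w' =>
      (if b then - ((h == g)%:R *: Xi h) else (h == g)%:R%:M)
      + (if b then Xi h else X h) *m fox X Xi w' g
  end.

(* The Fox matrix (rows: relators, columns: generators, each entry a    *)
(* q x q block) with row r0 and column c0 deleted; the deletion is      *)
(* realised (up to sign) by replacing block (r0,c0) by the identity and *)
(* the rest of block-row r0 and block-column c0 by zero.                *)
Definition fox_minor (F : fieldType) q n (X Xi : dart n -> 'M[F]_q)
    (rel : dart n -> word n) (r0 c0 : dart n) : 'M[F]_#|{: dart n * 'I_q}| :=
  \matrix_(i, j)
    (let: (r, a) := enum_val i in let: (g, b) := enum_val j in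
     if r == r0 then (if g == c0 then (a == b)%:R else 0)
     else if g == c0 then 0 else fox X Xi (rel r) g a b).

Definition wada (F : fieldType) q n (X Xi : dart n -> 'M[F]_q)
    (rel : dart n -> word n) (r0 c0 : dart n) : F :=
  \det (fox_minor X Xi rel r0 c0) / \det (1%:M - X c0).

Definition Fpt (p : nat) := {fraction {poly 'F_p}}.
Definition tt (p : nat) : Fpt p := @FracField.tofrac _ ('X : {poly 'F_p}).

Definition twisted_alex n p (e : dart n -> dart n) (a : dart n -> Dp p) : Fpt p :=
  wada (fun d => tt p *: rho (Fpt p) (a d))
       (fun d => (tt p)^-1 *: rho (Fpt p) (Dinv (a d)))
       (relator e) (dart0 n) (dart0 n).

(* Alexander polynomial Delta_K (Fox: determinant of the abelianised    *)
(* Fox matrix minor), reduced mod p, evaluated at tau                   *)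
Definition alex n p (e : dart n -> dart n) (tau : Fpt p) : Fpt p :=
  \det (fox_minor (fun _ => tau%:M : 'M[Fpt p]_1) (fun _ => tau^-1%:M)
          (relator e) (dart0 n) (dart0 n)).

From Pilot Require Import Defs.
From mathcomp Require Import all_boot all_order all_algebra.
From mathcomp Require Import fraction ring.
Import GRing.Theory.
Local Open Scope ring_scope.

Set Implicit Arguments.
Unset Strict Implicit.
Unset Printing Implicit Defensive.

(* 1. Over F_p the functions k |-> k^a (a < p) form a basis of F_p^(Z/p)    *)
(*    (a Vandermonde matrix with distinct nodes), in which an affine map     *)
(*    k |-> -+k + c of Z/p acts by an upper triangular matrix with diagonal  *)
(*    entries (-+1)^a (binomial expansion).                                 *)
(* 2. Under upper triangular images of the generators the Fox derivatives   *)
(*    are upper triangular, with a-th diagonal entry the Fox derivative     *)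
(*    under the 1-dimensional a-th diagonal representation.  Ordering the   *)
(*    rows and columns of the Fox minor by this level a makes it block      *)
(*    upper triangular: the Fox minor of rho o alpha is the product of the  *)
(*    abelian Fox minors at the points (-1)^a t, i.e. of Delta_K((-1)^a t), *)
(*    and det(1 - t rho(alpha x_0)) = prod_a (1 - (-1)^a t).                *)
(* 3. The reflection bit of D_p is a homomorphism to Z/2, constant along    *)
(*    the knot by the Wirtinger relations; as alpha is onto, every meridian *)
(*    goes to a reflection, so the diagonal signs are indeed (-1)^a.        *)
(* Grouping the p factors by the parity of a gives the formula, with no     *)
(* indeterminacy at all (s = false, k = 0).                                 *)

Lemma det_reindex (R : comNzRingType) m n (e : m = n) (f : 'I_m -> 'I_n)
    (f_inj : injective f) (B : 'M[R]_n) :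
  \det (\matrix_(i, j) B (f i) (f j)) = \det B.
Proof.
subst m; set s := perm.perm f_inj.
have -> : \matrix_(i, j) B (f i) (f j) = row_perm s (col_perm s B).
  by apply/matrixP=> i j; rewrite !mxE /s !perm.permE.
rewrite row_permE col_permE !det_mulmx !det_perm perm.odd_permV.
by rewrite mulrCA -signr_addb addbb expr0 mulr1.
Qed.

Lemma det_castmx (R : comNzRingType) n n' (e : n = n') (A : 'M[R]_n) :
  \det (castmx (e, e) A) = \det A.
Proof. by case: n' / e; rewrite castmx_id. Qed.

Lemma det_block_upper (R : comNzRingType) D q (F : nat -> nat -> R) :
  (forall i j, (i < q * D)%N -> (j < q * D)%N -> (j %/ D < i %/ D)%N ->
     F i j = 0) ->
  \det (\matrix_(i, j < q * D) F i j) =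
    \prod_(a < q) \det (\matrix_(i, j < D) F (a * D + i)%N (a * D + j)%N).
Proof.
elim: q F => [|q IH] F F_low; first by rewrite big_ord0 det_mx00.
have split_size : (q.+1 * D = D + q * D)%N by rewrite mulSn.
rewrite -(det_castmx split_size).
set M := \matrix_(i, j < D + q * D) F i j.
have -> : castmx (split_size, split_size) (\matrix_(i, j < q.+1 * D) F i j) = M.
  by apply/matrixP=> i j; rewrite castmxE !mxE.
rewrite -(submxK M).
have -> : dlsubmx M = 0.
  apply/matrixP=> i j; rewrite !mxE /=; apply: F_low.
  - by rewrite mulSn ltn_add2l.
  - by rewrite mulSn (leq_trans (ltn_ord j)) ?leq_addr.
  - have D0 : (0 < D)%N by case: (D) j => [[]|].
    by rewrite divn_small // addnC divnDr ?dvdnn // divnn D0 addn1.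
rewrite det_ublock big_ord_recl; congr (_ * _).
  by congr (\det _); apply/matrixP=> i j; rewrite !mxE.
have -> : drsubmx M = \matrix_(i, j < q * D) F (D + i)%N (D + j)%N.
  by apply/matrixP=> i j; rewrite !mxE.
rewrite (IH (fun i j => F (D + i)%N (D + j)%N)).
  by apply: eq_bigr => a _; congr (\det _); apply/matrixP=> i j;
     rewrite !mxE /= mulSn !addnA.
move=> i j lt_i lt_j lt_ij; apply: F_low; rewrite ?mulSn ?ltn_add2l //.
have D0 : (0 < D)%N by case: (D) lt_i; rewrite ?muln0.
by rewrite !(addnC D) !divnDr ?dvdnn // divnn D0 !addn1 ltnS.
Qed.

Section IndexedMatrices.
Variables (R : comNzRingType) (J : finType).

Definition mxI (f : J -> J -> R) : 'M[R]_#|J| :=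
  \matrix_(i, j) f (enum_val i) (enum_val j).

Lemma sum_enum (G : J -> R) : \sum_(j < #|J|) G (enum_val j) = \sum_y G y.
Proof.
rewrite [RHS](reindex (@enum_val J xpredT)) //.
by apply: onW_bij; apply: enum_val_bij.
Qed.

Lemma mxI_mul f g : mxI f *m mxI g = mxI (fun x z => \sum_y f x y * g y z).
Proof.
apply/matrixP => i k; rewrite !mxE.
rewrite -(sum_enum (fun y => f (enum_val i) y * g y (enum_val k))).
by apply: eq_bigr => j _; rewrite !mxE.
Qed.

Lemma eq_mxI f g : (forall x y, f x y = g x y) -> mxI f = mxI g.
Proof. by move=> fg; apply/matrixP => i j; rewrite !mxE fg. Qed.

End IndexedMatrices.

Section BlockDiagonal.
Variables (R : comNzRingType) (I : finType) (q : nat).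
Local Notation J := (I * 'I_q)%type.

Definition bdiag (A : 'M[R]_q) : 'M[R]_#|{: J}| :=
  mxI (fun x y : J => (x.1 == y.1)%:R * A x.2 y.2).

Lemma sum_pair (G : J -> R) :
  \sum_(y : J) G y = \sum_(r : I) \sum_(a < q) G (r, a).
Proof. by rewrite pair_big; apply: eq_bigr => -[]. Qed.

Lemma bdiag_mull (A : 'M[R]_q) (f : J -> J -> R) :
  bdiag A *m mxI f = mxI (fun x z => \sum_(a < q) A x.2 a * f (x.1, a) z).
Proof.
rewrite mxI_mul; apply: eq_mxI => x z; rewrite sum_pair /=.
rewrite (bigD1 x.1) //= [X in _ + X]big1 ?addr0 => [|r nr]; last first.
  by apply: big1 => a _; rewrite eq_sym (negbTE nr) !mul0r.
by apply: eq_bigr => a _; rewrite eqxx mul1r.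
Qed.

Lemma bdiag_mulr (B : 'M[R]_q) (f : J -> J -> R) :
  mxI f *m bdiag B = mxI (fun x z => \sum_(b < q) f x (z.1, b) * B b z.2).
Proof.
rewrite mxI_mul; apply: eq_mxI => x z; rewrite sum_pair /=.
rewrite (bigD1 z.1) //= [X in _ + X]big1 ?addr0 => [|r nr]; last first.
  by apply: big1 => b _; rewrite (negbTE nr) !mul0r mulr0.
by apply: eq_bigr => b _; rewrite eqxx mul1r.
Qed.

End BlockDiagonal.

Section Levels.
Variables (R : comNzRingType) (I : finType) (x0 : I) (q' : nat).
Local Notation q := q'.+1.
Local Notation D := #|I|.

Lemma card_gt0_I : (0 < D)%N. Proof. by apply/card_gt0P; exists x0. Qed.

Definition level_index (k : nat) : (I * 'I_q)%type :=
  (enum_val (Ordinal (div.ltn_pmod k card_gt0_I)), insubd ord0 (k %/ D)%N).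

Lemma level_indexE k : (k < q * D)%N -> val (level_index k).2 = (k %/ D)%N.
Proof. by move=> lt_k; rewrite val_insubd ltn_divLR ?card_gt0_I // lt_k. Qed.

Lemma level_indexMD (a : 'I_q) (k : 'I_D) :
  level_index (a * D + k) = (enum_val k, a).
Proof.
rewrite /level_index; congr (_, _).
  by congr enum_val; apply/val_inj => /=; rewrite modnMDl modn_small.
apply/val_inj; rewrite val_insubd divnMDl ?card_gt0_I // divn_small // addn0.
by rewrite ltn_ord.
Qed.

Lemma level_index_inj : injective (fun k : 'I_(q * D) => enum_rank (level_index k)).
Proof.
move=> i j /enum_rank_inj [] /enum_val_inj [] Emod /(congr1 val).
rewrite !level_indexE // => Ediv; apply/val_inj => /=.
by rewrite (divn_eq i D) (divn_eq j D) Emod Ediv.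
Qed.

Lemma det_mxI_levels (f : (I * 'I_q)%type -> (I * 'I_q)%type -> R) :
  (forall r (a : 'I_q) g (b : 'I_q), (b < a)%N -> f (r, a) (g, b) = 0) ->
  \det (mxI f) =
    \prod_(a < q) \det (mxI (fun x y : (I * 'I_1)%type => f (x.1, a) (y.1, a))).
Proof.
move=> f_low.
have cardJ : (q * D = #|{: I * 'I_q}|)%N by rewrite card_prod card_ord mulnC.
rewrite -(det_reindex cardJ level_index_inj).
rewrite (_ : \matrix_(i, j) _ = \matrix_(i, j < q * D)
              f (level_index i) (level_index j)); last first.
  by apply/matrixP => i j; rewrite !mxE !enum_rankK.
rewrite (det_block_upper (F := fun i j => f (level_index i) (level_index j))).
  apply: eq_bigr => a _.
  have cardI1 : (D = #|{: I * 'I_1}|)%N by rewrite card_prod card_ord muln1.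
  have inj1 : injective (fun k : 'I_D => enum_rank (enum_val k, ord0 : 'I_1)).
    by move=> i j /enum_rank_inj [] /enum_val_inj.
  rewrite -(det_reindex cardI1 inj1); congr (\det _); apply/matrixP => i j.
  by rewrite !mxE !enum_rankK /= !level_indexMD.
move=> i j lt_i lt_j lt_ij; apply: f_low.
by rewrite (level_indexE lt_i) (level_indexE lt_j).
Qed.

End Levels.

Lemma eq_fox (F : fieldType) q n (X1 Xi1 X2 Xi2 : dart n -> 'M[F]_q)
    (w : word n) g :
  (forall d, X1 d = X2 d) -> (forall d, Xi1 d = Xi2 d) ->
  fox X1 Xi1 w g = fox X2 Xi2 w g.
Proof. by move=> E1 E2; elim: w => [|[h b] w IH] //=; rewrite IH E1 E2. Qed.

Definition upper_trig (F : fieldType) q (M : 'M[F]_q) :=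
  forall i j : 'I_q, (j < i)%N -> M i j = 0.

Section FoxCalculus.
Variables (F : fieldType) (q n : nat).
Implicit Types (X Xi : dart n -> 'M[F]_q).

Lemma fox_conj X Xi (P : 'M[F]_q) (w : word n) g : P \in unitmx ->
  fox (fun d => invmx P *m X d *m P) (fun d => invmx P *m Xi d *m P) w g
  = invmx P *m fox X Xi w g *m P.
Proof.
move=> Pu; elim: w => [|[h b] w IH] /=; first by rewrite mulmx0 mul0mx.
rewrite IH mulmxDr mulmxDl; case: b; congr (_ + _).
- by rewrite mulmxN mulNmx -scalemxAr -scalemxAl.
- by rewrite !mulmxA -(mulmxA _ P) mulmxV // mulmx1.
- by rewrite scalar_mxC -mulmxA mulVmx // mulmx1.
- by rewrite !mulmxA -(mulmxA _ P) mulmxV // mulmx1.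
Qed.

Lemma upper_trig_scale (c : F) (M : 'M[F]_q) :
  upper_trig M -> upper_trig (c *: M).
Proof. by move=> M_up i j lt_ji; rewrite mxE M_up // mulr0. Qed.

Lemma upper_trig_mul (A B : 'M[F]_q) : upper_trig A -> upper_trig B ->
  upper_trig (A *m B) /\ forall a, (A *m B) a a = A a a * B a a.
Proof.
move=> A_up B_up; split.
  move=> i j lt_ji; rewrite mxE big1 // => k _.
  case: (ltnP k i) => [lt_ki|le_ik]; first by rewrite A_up ?mul0r.
  by rewrite B_up ?mulr0 // (leq_trans lt_ji).
move=> a; rewrite mxE (bigD1 a) //= big1 ?addr0 // => k nka.
case: (ltnP k a) => [lt_ka|le_ak]; first by rewrite A_up ?mul0r.
by rewrite B_up ?mulr0 // ltn_neqAle le_ak andbT eq_sym.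
Qed.

Lemma fox_upper_trig X Xi (w : word n) g :
  (forall d, upper_trig (X d)) -> (forall d, upper_trig (Xi d)) ->
  upper_trig (fox X Xi w g) /\ forall a,
   fox X Xi w g a a =
   fox (fun d => (X d a a)%:M : 'M[F]_1) (fun d => (Xi d a a)%:M) w g 0 0.
Proof.
move=> X_up Xi_up; elim: w => [|[h b] w [IH_up IH_diag]] /=.
  by split; [move=> i j _; rewrite mxE | move=> a; rewrite !mxE].
have gen_up : upper_trig (if b then Xi h else X h) by case: b.
have [prod_up prod_diag] := upper_trig_mul gen_up IH_up.
have head_up :
    upper_trig (if b then - ((h == g)%:R *: Xi h) else (h == g)%:R%:M).
  move=> i j lt_ji; case: b {gen_up prod_up prod_diag}; rewrite !mxE.
    by rewrite Xi_up // mulr0 oppr0.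
  by rewrite (_ : (i == j) = false) ?mulr0n // -val_eqE /= gtn_eqF.
split; first by move=> i j lt_ji; rewrite mxE prod_up // head_up // addr0.
move=> a; rewrite mxE prod_diag IH_diag [in RHS]mxE; congr (_ + _).
  by case: b {gen_up prod_up prod_diag head_up}; rewrite !mxE ?eqxx ?mulr1n.
by rewrite mxE big_ord1; case: b {gen_up prod_up prod_diag head_up}; rewrite mxE.
Qed.

End FoxCalculus.

Section FoxMinor.
Variables (F : fieldType) (q n : nat).
Implicit Types (X Xi : dart n -> 'M[F]_q).

Definition fox_minor_entry X Xi (rel : dart n -> word n) (r0 c0 : dart n)
    (x y : (dart n * 'I_q)%type) : F :=
  if x.1 == r0 then (if y.1 == c0 then (x.2 == y.2)%:R else 0)
  else if y.1 == c0 then 0 else fox X Xi (rel x.1) y.1 x.2 y.2.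

Lemma fox_minorE X Xi rel r0 c0 :
  fox_minor X Xi rel r0 c0 = mxI (fox_minor_entry X Xi rel r0 c0).
Proof.
apply/matrixP => i j; rewrite !mxE.
by case: (enum_val i) => r a; case: (enum_val j).
Qed.

Lemma fox_minor_conj X Xi rel r0 c0 (P : 'M[F]_q) : P \in unitmx ->
  fox_minor (fun d => invmx P *m X d *m P) (fun d => invmx P *m Xi d *m P)
    rel r0 c0
  = bdiag (dart n) (invmx P) *m fox_minor X Xi rel r0 c0 *m bdiag (dart n) P.
Proof.
move=> Pu; rewrite !fox_minorE bdiag_mull bdiag_mulr.
have PV a b : \sum_(b' < q) invmx P a b' * P b' b = (a == b)%:R.
  by have := congr1 (fun M : 'M[F]_q => M a b) (mulVmx Pu); rewrite !mxE.
apply: eq_mxI => -[r a] [g b]; rewrite /fox_minor_entry /=.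
case: (r == r0); case: (g == c0) => /=.
- rewrite -PV; apply: eq_bigr => b' _; congr (_ * _).
  rewrite (bigD1 b') //= eqxx mulr1 big1 ?addr0 // => a' /negbTE ->.
  by rewrite mulr0.
- by rewrite big1 // => b' _; rewrite big1 ?mul0r // => a' _; rewrite mulr0.
- by rewrite big1 // => b' _; rewrite big1 ?mul0r // => a' _; rewrite mulr0.
- by rewrite fox_conj // !mxE; apply: eq_bigr => b' _; rewrite !mxE.
Qed.

Lemma det_bdiag_inv (P : 'M[F]_q) : P \in unitmx ->
  \det (bdiag (dart n) (invmx P)) * \det (bdiag (dart n) P) = 1.
Proof.
move=> Pu; rewrite -det_mulmx [bdiag (dart n) P]/bdiag bdiag_mull.
rewrite -[RHS](det1 F #|{: dart n * 'I_q}|); congr (\det _).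
apply/matrixP => i j; rewrite !mxE /=.
have := congr1 (fun M : 'M[F]_q => M (enum_val i).2 (enum_val j).2) (mulVmx Pu).
rewrite !mxE => PV; case: eqP => [E1|N1].
  rewrite (_ : (i == j) = ((enum_val i).2 == (enum_val j).2)).
    by rewrite -PV; apply: eq_bigr => a _; rewrite mul1r.
  apply/eqP/eqP => [->//|E2]; apply: enum_val_inj.
  by case: (enum_val i) (enum_val j) E1 E2 => [? ?] [? ?] /= -> ->.
rewrite (_ : (i == j) = false); last by apply/negbTE/eqP => E2; apply: N1; rewrite E2.
by rewrite big1 // => a _; rewrite mul0r mulr0.
Qed.

Lemma det_fox_minor_conj X Xi rel r0 c0 (P : 'M[F]_q) : P \in unitmx ->
  \det (fox_minor (fun d => invmx P *m X d *m P)
          (fun d => invmx P *m Xi d *m P) rel r0 c0)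
  = \det (fox_minor X Xi rel r0 c0).
Proof.
by move=> Pu; rewrite fox_minor_conj // !det_mulmx mulrAC det_bdiag_inv // mul1r.
Qed.

End FoxMinor.

(* For upper triangular representations the Fox minor is block upper       *)
(* triangular with respect to the level a, so its determinant is the        *)
(* product of the Fox minors of the 1-dimensional diagonal representations. *)
Lemma det_fox_minor_upper (F : fieldType) q' n (X Xi : dart n -> 'M[F]_q'.+1)
    (rel : dart n -> word n) (r0 c0 : dart n) :
  (forall d, upper_trig (X d)) -> (forall d, upper_trig (Xi d)) ->
  \det (fox_minor X Xi rel r0 c0) =
    \prod_(a < q'.+1) \det (fox_minor (fun d => (X d a a)%:M : 'M[F]_1)
                              (fun d => (Xi d a a)%:M) rel r0 c0).
Proof.
move=> X_up Xi_up; rewrite fox_minorE (det_mxI_levels r0); last first.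
  move=> r a g b lt_ba; rewrite /fox_minor_entry /=.
  case: ifP => _; case: ifP => _ //.
    by rewrite (_ : (a == b) = false) ?mulr0n // -val_eqE /= gtn_eqF.
  by have [up _] := fox_upper_trig (rel r) g X_up Xi_up; apply: up.
apply: eq_bigr => a _; rewrite fox_minorE; congr (\det _).
apply: eq_mxI => -[r i] [g j]; rewrite /fox_minor_entry /= !ord1 eqxx.
case: ifP => _; case: ifP => _ //.
by have [_ diag] := fox_upper_trig (rel r) g X_up Xi_up; rewrite diag.
Qed.

Section Triangularisation.
Variable p : nat.
Hypothesis p_prime : prime p.
Local Notation F := (Fpt p).
Local Notation q := (Zp_trunc p).+2.

Lemma Zp_size : q = p. Proof. by rewrite Zp_cast // prime_gt1. Qed.

Lemma pchar_Fpt : p \in [pchar F].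
Proof.
apply: (rmorph_pchar (@FracField.tofrac _)); apply: (rmorph_pchar polyC).
exact: pchar_Fp.
Qed.

Lemma natr_mod_Zp m : (((m %% q)%N)%:R : F) = m%:R.
Proof.
rewrite {2}(divn_eq m q) natrD natrM Zp_size.
by rewrite (pcharf0 pchar_Fpt) mulr0 add0r.
Qed.

Definition embZp (x : 'Z_p) : F := (val x)%:R.

Lemma embZpD x y : embZp (x + y) = embZp x + embZp y.
Proof. by rewrite /embZp -natrD -[RHS]natr_mod_Zp. Qed.

Lemma embZpN x : embZp (- x) = - embZp x.
Proof. by apply/eqP; rewrite -subr_eq0 opprK -embZpD addNr. Qed.

Lemma embZpB x y : embZp (x - y) = embZp x - embZp y.
Proof. by rewrite embZpD embZpN. Qed.

(* ... and injective, since p divides no nonzero difference below p. *)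
Lemma embZp_inj : injective embZp.
Proof.
have lt_p (x : 'Z_p) : (val x < p)%N := leq_trans (ltn_ord x) (eq_leq Zp_size).
move=> x y E; apply/val_inj => /=.
wlog le_xy : x y E / (val x <= val y)%N.
  move=> W; case: (leqP (val x) (val y)) => [|/ltnW] h; first exact: W.
  by apply/esym/W.
have : (p %| val y - val x)%N.
  by rewrite (dvdn_pcharf pchar_Fpt) natrB // -/(embZp y) -E subrr eqxx.
case: (posnP (val y - val x)) => [|pos_yx dvd_p].
  by move/eqP; rewrite subn_eq0 => le_yx _; apply/eqP; rewrite eqn_leq le_xy.
have := leq_ltn_trans (dvdn_leq pos_yx dvd_p) (leq_ltn_trans (leq_subr _ _) (lt_p y)).
by rewrite ltnn.
Qed.

Definition power_basis : 'M[F]_q := \matrix_(i, a) (embZp i) ^+ a.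

(* A Vandermonde matrix with distinct nodes is invertible. *)
Lemma power_basis_unit : power_basis \in unitmx.
Proof.
rewrite unitmxE unitfE -det_tr.
have -> : power_basis^T = Vandermonde q (\row_i embZp i).
  by apply/matrixP => k i; rewrite !mxE.
rewrite det_Vandermonde; apply/prodf_neq0 => i _; apply/prodf_neq0 => j lt_ij.
rewrite !mxE subr_eq0; apply/negP => /eqP /embZp_inj /eqP.
by rewrite -val_eqE /= gtn_eqF.
Qed.

(* g acts by k |-> sign g * k + g.2; its inverse is k |-> shift g + sign g * k. *)
Definition dsign (g : Dp p) : F := if g.1 then -1 else 1.
Definition dshift (g : Dp p) : F := - (dsign g * embZp g.2).

Lemma Dact_eq (g : Dp p) (i j : 'Z_p) :
  (i == Dact g j) = (j == if g.1 then g.2 - i else i - g.2).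
Proof. by case: g => [[] c]; rewrite /Dact /=; apply/eqP/eqP => ->; ring. Qed.

(* rho(g) in the monomial basis: (j, a) entry C(a, j) sign^j shift^(a-j). *)
Definition rho_tri (g : Dp p) : 'M[F]_q :=
  \matrix_(j, a) (('C(a, j))%:R * dsign g ^+ j * dshift g ^+ (a - j)).

(* Binomial expansion of (shift + sign * k)^a. *)
Lemma rho_power_basis (g : Dp p) : rho F g *m power_basis = power_basis *m rho_tri g.
Proof.
apply/matrixP => i a; rewrite !mxE.
set j0 := if g.1 then g.2 - i else i - g.2.
rewrite (bigD1 j0) //= big1 => [|j nj]; last first.
  by rewrite !mxE Dact_eq (negbTE nj) mul0r.
rewrite !mxE Dact_eq eqxx mul1r addr0.
have -> : embZp j0 = dshift g + dsign g * embZp i.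
  by rewrite /j0 /dshift /dsign; clear j0; case: g => [[] c] /=; rewrite embZpB; ring.
rewrite exprDn (big_ord_widen q (fun j =>
  dshift g ^+ (a - j) * (dsign g * embZp i) ^+ j *+ 'C(a, j)) (ltn_ord a)).
rewrite big_mkcond /=; apply: eq_bigr => j _; rewrite !mxE.
case: ltnP => [_|le_aj]; last by rewrite bin_small // !mul0r mulr0.
by rewrite exprMn -mulrnAr mulrnAl -mulr_natl; ring.
Qed.

Lemma conj_rho (g : Dp p) : invmx power_basis *m rho F g *m power_basis = rho_tri g.
Proof.
by rewrite -mulmxA rho_power_basis mulmxA mulVmx ?power_basis_unit // mul1mx.
Qed.

Lemma rho_tri_upper g : upper_trig (rho_tri g).
Proof. by move=> j a lt_aj; rewrite mxE bin_small // !mul0r. Qed.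

Lemma rho_tri_diag g a : rho_tri g a a = dsign g ^+ a.
Proof. by rewrite mxE binn subnn expr0 mulr1 mul1r. Qed.

End Triangularisation.

(* Every dart is arriving or its opposite is: the two strand orbits are the *)
(* two orientations of the knot, and opp reverses the orientation.          *)
Section Orientation.
Variables (n : nat) (e : dart n -> dart n).
Hypothesis hK : knot_diagram e.
Local Notation s := (strand e).
Local Notation opp := Defs.opp.

Lemma oppK (d : dart n) : opp (opp d) = d.
Proof.
by case: d => c [[|[|[|[|k]]]] lt_k] //;
   apply/pair_equal_spec; split=> //; apply/val_inj.
Qed.

Lemma opp_neq (d : dart n) : opp d != d.
Proof. by case: d => c [[|[|[|[|k]]]] lt_k] //; rewrite xpair_eqE eqxx. Qed.

Lemma eK d : e (e d) = d. Proof. by case: hK. Qed.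
Lemma e_neq d : e d != d. Proof. by case: hK. Qed.

Lemma strand_inj : injective s.
Proof.
move=> x y; rewrite /strand => /(congr1 e); rewrite !eK.
by move/(congr1 (@Defs.opp n)); rewrite !oppK.
Qed.

Lemma e_strand d : e (s d) = opp d. Proof. by rewrite /strand eK. Qed.

Lemma strand_opp_strand y : s (opp (s y)) = opp y.
Proof. by rewrite /strand oppK e_strand. Qed.

(* If opp y lay c steps ahead of y, then opp would reflect the segment of  *)
(* the orbit from y to iter c s y onto itself.                            *)
Lemma opp_iter_reflect y c : opp y = iter c s y ->
  forall i, (i <= c)%N -> opp (iter i s y) = iter (c - i) s y.
Proof.
move=> E; elim=> [|i IH] le_ic; first by rewrite subn0.
apply: strand_inj; rewrite iterS strand_opp_strand IH ?(ltnW le_ic) //.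
by rewrite -iterS subnSK.
Qed.

(* ... which is impossible: the middle of the segment would be a fixed     *)
(* point of opp (c even) or an edge with e d = d (c odd).                 *)
Lemma opp_not_iter y c : opp y <> iter c s y.
Proof.
move=> E; have le_half : (c./2 <= c)%N.
  by rewrite leq_half_double -addnn leqW // leq_addr.
have := opp_iter_reflect E le_half.
case: (boolP (odd c)) => odd_c.
  have -> : (c - c./2 = (c./2).+1)%N.
    by rewrite -{1}(odd_double_half c) odd_c -addnn add1n subSn ?leq_addr // addnK.
  rewrite iterS => E2.
  by have := e_neq (opp (iter c./2 s y)); rewrite {1}E2 e_strand eqxx.
have -> : (c - c./2 = c./2)%N.
  by rewrite -{1}(odd_double_half c) (negbTE odd_c) add0n -addnn addnK.
by move=> E2; have := opp_neq (iter c./2 s y); rewrite E2 eqxx.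
Qed.

Lemma opp_not_connected y : fconnect s y (opp y) = false.
Proof. by apply/negbTE/negP => /iter_findex E; exact: (opp_not_iter (esym E)). Qed.

Lemma strand_sym : connect_sym (frel s).
Proof. by move=> x y; apply: fconnect_sym; apply: strand_inj. Qed.

(* The opposite of an arriving dart is departing ... *)
Lemma arriving_opp d : arriving e d -> arriving e (opp d) = false.
Proof.
rewrite /arriving => arr_d; apply/negbTE/negP => arr_opp.
have : fconnect s d (opp d) by apply: connect_trans arr_opp; rewrite strand_sym.
by rewrite opp_not_connected.
Qed.

Lemma three_orbits x y z :
  ~~ fconnect s x y -> ~~ fconnect s x z -> ~~ fconnect s y z ->
  (3 <= fcard s (predT : pred (dart n)))%N.
Proof.
move=> nxy nxz nyz; set rs := [:: froot s x; froot s y; froot s z].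
have rs_uniq : uniq rs.
  by rewrite /rs /= !inE !(root_connect strand_sym) (negbTE nxy) (negbTE nxz) (negbTE nyz).
suff : (#|rs| <= fcard s (predT : pred (dart n)))%N by rewrite (card_uniqP rs_uniq).
apply: subset_leq_card; apply/subsetP => r.
by rewrite !inE /= => /or3P [] /eqP ->;
   rewrite /roots /= root_root ?eqxx //; exact: strand_sym.
Qed.

(* ... and vice versa, since there are only two strand orbits. *)
Lemma nonarriving_opp d : arriving e d = false -> arriving e (opp d).
Proof.
move=> narr_d; apply/negPn/negP => narr_opp.
have := three_orbits (x := dart0 n) (y := d) (z := opp d).
rewrite /arriving in narr_d narr_opp; rewrite narr_d (negbTE narr_opp).
by rewrite opp_not_connected; case: hK => _ _ _ -> /(_ isT isT isT).
Qed.

End Orientation.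

(* A D_p-colouring of the diagram that is onto sends every meridian to a  *)
(* reflection.  The reflection bit g.1 is a homomorphism to Z/2, constant  *)
(* along the knot by the Wirtinger relations.                             *)
Section Reflections.
Variables (p n : nat) (e : dart n -> dart n) (alpha : dart n -> Dp p).
Hypothesis hK : knot_diagram e.
Hypothesis hhom : is_hom e alpha.
Local Notation s := (strand e).
Local Notation refl d := (alpha d).1.

Lemma evalw_refl (w : word n) :
  (evalw alpha w).1 = foldr (fun x b => refl x.1 (+) b) false w.
Proof. by elim: w => [|[d b] w IH] //=; rewrite -IH; case: b. Qed.

Lemma relator_refl d : foldr (fun x b => refl x.1 (+) b) false (relator e d) = false.
Proof. by rewrite -evalw_refl hhom. Qed.

Lemma refl_departing d : arriving e d = false -> refl (e d) = refl d.
Proof.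
move=> dep; have := relator_refl d; rewrite /relator dep /=.
by case: (refl (e d)); case: (refl d).
Qed.

Lemma refl_arriving d : arriving e d -> refl (Defs.opp d) = refl d.
Proof.
move=> arr; have := relator_refl d; rewrite /relator arr.
case: ifP => _ /=; first by case: (refl (Defs.opp d)); case: (refl d).
by case: ifP => _ /=; case: (refl (Defs.opp d)); case: (refl d); case: (refl _).
Qed.

Lemma refl_const d : refl d = refl (dart0 n).
Proof.
have along c : refl (iter c s (dart0 n)) = refl (dart0 n).
  elim: c => [//|c IH]; rewrite iterS.
  have arr : arriving e (iter c s (dart0 n)) by apply: fconnect_iter.
  by rewrite {1}/strand refl_departing ?arriving_opp // refl_arriving.
case: (boolP (arriving e d)) => arr_d; first by rewrite -(iter_findex arr_d) along.
have arr_opp := nonarriving_opp hK (negbTE arr_d).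
by rewrite -{1}(oppK d) refl_arriving // -(iter_findex arr_opp) along.
Qed.

(* Were it 0, no word would map to the reflection x of D_p. *)
Lemma all_reflections : is_epi alpha -> forall d, refl d = true.
Proof.
move=> hepi d; rewrite refl_const; apply/negP => /negP /negbTE refl0.
have [w Ew] := hepi (Dx p).
suff : (evalw alpha w).1 = false by rewrite Ew.
by rewrite evalw_refl; elim: w {Ew} => [//|[x b] w IH] /=; rewrite IH refl_const refl0.
Qed.

End Reflections.

Lemma prod_parity (R : comNzRingType) (h : nat -> R) m :
  (forall a, h a = h (odd a)) ->
  \prod_(a < (m.*2).+1) h a = h 0%N ^+ m.+1 * h 1%N ^+ m.
Proof.
move=> h_odd; elim: m => [|m IH]; first by rewrite big_ord1 expr1 expr0 mulr1.
rewrite doubleS big_ord_recr big_ord_recr /= IH (h_odd m.*2.+1) (h_odd m.*2.+2).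
by rewrite /= odd_double /= !exprS; ring.
Qed.

Section Factorisation.
Variables (p n : nat) (e : dart n -> dart n) (alpha : dart n -> Dp p).
Hypothesis p_prime : prime p.
Hypothesis reflections : forall d, (alpha d).1 = true.
Local Notation F := (Fpt p).
Local Notation q := (Zp_trunc p).+2.
Local Notation P := (power_basis p).

Definition rep d : 'M[F]_q := tt p *: rho F (alpha d).
Definition rep_inv d : 'M[F]_q := (tt p)^-1 *: rho F (Dinv (alpha d)).

Lemma conj_rep d : invmx P *m rep d *m P = tt p *: rho_tri (alpha d).
Proof. by rewrite /rep -scalemxAr -scalemxAl conj_rho. Qed.

Lemma conj_rep_inv d :
  invmx P *m rep_inv d *m P = (tt p)^-1 *: rho_tri (Dinv (alpha d)).
Proof. by rewrite /rep_inv -scalemxAr -scalemxAl conj_rho. Qed.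

Lemma rep_diag d (a : 'I_q) : (tt p *: rho_tri (alpha d)) a a = tt p * (-1) ^+ a.
Proof. by rewrite mxE rho_tri_diag /dsign reflections. Qed.

Lemma rep_inv_diag d (a : 'I_q) :
  ((tt p)^-1 *: rho_tri (Dinv (alpha d))) a a = (tt p * (-1) ^+ a)^-1.
Proof.
by rewrite mxE rho_tri_diag /dsign /= reflections invfM invr_sign.
Qed.

Lemma wada_numerator :
  \det (fox_minor rep rep_inv (relator e) (dart0 n) (dart0 n))
  = \prod_(a < q) alex e (tt p * (-1) ^+ a).
Proof.
rewrite -(det_fox_minor_conj rep rep_inv (relator e) (dart0 n) (dart0 n)
            (power_basis_unit p_prime)).
rewrite (_ : fox_minor _ _ _ _ _ = fox_minor (fun d => tt p *: rho_tri (alpha d))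
  (fun d => (tt p)^-1 *: rho_tri (Dinv (alpha d))) (relator e) (dart0 n) (dart0 n)); last first.
  by rewrite !fox_minorE; apply: eq_mxI => x y; rewrite /fox_minor_entry
       (eq_fox _ _ conj_rep conj_rep_inv).
rewrite det_fox_minor_upper => [|d|d]; try exact/upper_trig_scale/rho_tri_upper.
apply: eq_bigr => a _; rewrite /alex !fox_minorE; apply: congr1; apply: eq_mxI => x y.
by rewrite /fox_minor_entry (eq_fox _ _ (fun d => congr1 _ (rep_diag d a))
     (fun d => congr1 _ (rep_inv_diag d a))).
Qed.

Lemma wada_denominator :
  \det (1%:M - rep (dart0 n)) = \prod_(a < q) (1 - tt p * (-1) ^+ a).
Proof.
have Pu := power_basis_unit p_prime.
have -> : \det (1%:M - rep (dart0 n)) = \det (invmx P *m (1%:M - rep (dart0 n)) *m P).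
  have detP : \det P != 0 by move: Pu; rewrite unitmxE unitfE.
  by rewrite !det_mulmx det_inv mulrAC mulVf // mul1r.
rewrite mulmxBr mulmxBl mulmx1 mulVmx // conj_rep -det_tr det_trig.
  by apply: eq_bigr => a _; rewrite -(rep_diag (dart0 n) a) !mxE eqxx.
apply/is_trig_mxP => i j lt_ij; rewrite !mxE bin_small // (_ : (j == i) = false).
  by rewrite mulr0n !mul0r mulr0 subr0.
by rewrite -val_eqE /= gtn_eqF.
Qed.

End Factorisation.

Theorem proposition5 (p : nat) (hp : prime p) (hodd : odd p)
    (n : nat) (e : dart n -> dart n) (hK : knot_diagram e)
    (alpha : dart n -> Dp p) (hhom : is_hom e alpha) (hepi : is_epi alpha) :
  exists (s : bool) (k : int),
    twisted_alex e alpha =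
      (-1) ^+ s * tt p ^ k
      * (alex e (tt p) / (1 - tt p)) ^+ (p./2).+1
      * (alex e (- tt p) / (1 + tt p)) ^+ p./2.
Proof.
have reflections := all_reflections hK hhom hepi.
have size_p : (Zp_trunc p).+2 = ((p./2).*2).+1.
  by rewrite Zp_size // -{1}(odd_double_half p) hodd add1n.
pose factor a := alex e (tt p * (-1) ^+ a) / (1 - tt p * (-1) ^+ a).
exists false, 0; rewrite expr0 expr0z !mul1r.
rewrite [twisted_alex _ _]/(wada _ _ _ _ _) (wada_numerator _ hp reflections).
rewrite (wada_denominator hp reflections) -prodfV -big_split /=.
rewrite -(big_mkord xpredT factor) size_p big_mkord prod_parity => [|a].
  by rewrite /factor expr0 expr1 !mulr1 mulrN1 opprK.
by rewrite /factor signr_odd.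
Qed.
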